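(* For each $\theta\in\mathbb R$, the function $r\mapsto T(re^{i\theta})$ is strictly decreasing on $(0,1)$ and strictly increasing on $(1,\infty)$, its minimum over $r\in(0,\infty)$ is attained at $r=1$, $\lim_{r\to0}T(re^{i\theta})=\lim_{r\to\infty}T(re^{i\theta})=\infty$, and $T(re^{i\theta})=T(r^{-1}e^{i\theta})$ for all $r>0$.
   Context: Let $\mu$ be a Borel probability measure on $\mathbb T$. For $r\in(0,\infty)\setminus\{1\}$ and $\theta\in\mathbb R$ let $f(r,\theta)=\frac12\frac{1-r^2}{-\log r}\int_{-\pi}^{\pi}\frac{d\mu(e^{ix})}{|1-re^{i(\theta-x)}|^2}$, and let $f(1^-,\theta)=\lim_{r\to1^-}f(r,\theta)=\int_{-\pi}^{\pi}\frac{d\mu(e^{ix})}{|1-e^{i(\theta-x)}|^2}\in(0,\infty]$. Define $T(re^{i\theta})=1/f(r,\theta)$ for $r\neq1$ and $T(e^{i\theta})=1/f(1^-,\theta)$ (with $1/\infty=0$). *)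

From Stdlib Require Import Reals Lra ClassicalEpsilon.
Open Scope R_scope.

(* Continuous 2*PI-periodic functions R -> R, i.e. continuous functions on the
   circle T, written g(e^{ix}) = g x. *)
Definition periodic_cont (g : R -> R) : Prop :=
  (forall x, continuity_pt g x) /\ (forall x, g (x + 2 * PI) = g x).

(* A Borel probability measure mu on T, represented (Riesz-Markov) by its
   integration functional  L g = \int g(e^{ix}) dmu(e^{ix}) : a positive,
   normalized linear functional on C(T). *)
Definition is_circle_prob (L : (R -> R) -> R) : Prop :=
  (forall g h, periodic_cont g -> periodic_cont h ->
      L (fun x => g x + h x) = L g + L h) /\
  (forall c g, periodic_cont g -> L (fun x => c * g x) = c * L g) /\
  (forall g, periodic_cont g -> (forall x, 0 <= g x) -> 0 <= L g) /\
  L (fun _ => 1) = 1.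

(* |1 - r e^{it}|^2 written out *)
Definition absq_1_minus (r t : R) : R :=
  (1 - r * cos t) ^ 2 + (r * sin t) ^ 2.

(* f(r,theta) for r in (0,oo) \ {1} *)
Definition f (L : (R -> R) -> R) (r theta : R) : R :=
  / 2 * ((1 - r ^ 2) / (- ln r)) *
  L (fun x => / absq_1_minus r (theta - x)).

Definition lim_left1 (F : R -> R) (l : R) : Prop :=
  forall eps, 0 < eps -> exists delta, 0 < delta /\
    forall r, 1 - delta < r < 1 -> Rabs (F r - l) < eps.

(* T(e^{i theta}) = 1 / f(1^-, theta), with 1/oo = 0: if f(r,theta) has a finite
   limit l as r -> 1^-, the value is 1/l; otherwise (limit +oo) it is 0. *)
Definition T1 (L : (R -> R) -> R) (theta : R) : R :=
  match excluded_middle_informative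
          (exists l, lim_left1 (fun r => f L r theta) l) with
  | left H => / proj1_sig (constructive_indefinite_description _ H)
  | right _ => 0
  end.

Definition T (L : (R -> R) -> R) (r theta : R) : R :=
  if Req_EM_T r 1 then T1 L theta else / f L r theta.

(* Write P_r(x) = |1 - r e^{i(theta - x)}|^-2 ([kernel r theta]), so that
   f(r, theta) = (1 - r^2) / (-2 ln r) * L(P_r).  Two identities drive everything.
   First, P_{1/r} = r^2 P_r, which makes f, hence T, invariant under r -> 1/r.
   Second, for 0 < r < 1,
     f(r, theta) = L((1 + r)^2 P_r) / (2 h(r)),  h(r) = -ln r * (1 + r) / (1 - r)
   ([ln_weight]),
   where (1 + r)^2 P_r(x) is pointwise nondecreasing in r and h is strictly
   decreasing (a mean value argument), so f increases and T decreases on (0, 1).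
   The minimum at r = 1 follows since a limit from the left of an increasing
   function dominates its values, and T(r) >= -ln r / 2 for r <= 1/2 because
   P_r <= 4 there, which gives the limit at 0 and, by symmetry, at infinity. *)
From Stdlib Require Import Reals Lra FunctionalExtensionality ClassicalEpsilon.
From Coquelicot Require Import Coquelicot.
(* Imported last, since Coquelicot also exports an [f]. *)
Open Scope R_scope.

Lemma periodic_cont_const (c : R) : periodic_cont (fun _ => c).
Proof.
split; [|reflexivity].
intros x; apply continuity_pt_const; intros ? ?; reflexivity.
Qed.

Lemma periodic_cont_scal (c : R) (g : R -> R) :
  periodic_cont g -> periodic_cont (fun x => c * g x).
Proof.
intros [g_cont g_per]; split.
- intros x; apply continuity_pt_scal, g_cont.
- intros x; rewrite g_per; reflexivity.
Qed.

Lemma periodic_cont_minus (g h : R -> R) :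
  periodic_cont g -> periodic_cont h -> periodic_cont (fun x => h x - g x).
Proof.
intros [g_cont g_per] [h_cont h_per]; split.
- intros x; apply continuity_pt_minus; auto.
- intros x; rewrite g_per, h_per; reflexivity.
Qed.

Section CircleProb.
Variable L : (R -> R) -> R.
Hypothesis hL : is_circle_prob L.

Lemma circle_prob_scal (c : R) (g : R -> R) :
  periodic_cont g -> L (fun x => c * g x) = c * L g.
Proof. destruct hL as [_ [L_scal _]]; auto. Qed.

Lemma circle_prob_const (c : R) : L (fun _ => c) = c.
Proof.
destruct hL as [_ [_ [_ L_one]]].
replace (fun _ : R => c) with (fun _ : R => c * 1)
  by (apply functional_extensionality; intros; ring).
rewrite (circle_prob_scal c (fun _ => 1)), L_one by apply periodic_cont_const.
ring.
Qed.

Lemma circle_prob_le (g h : R -> R) :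
  periodic_cont g -> periodic_cont h -> (forall x, g x <= h x) -> L g <= L h.
Proof.
intros g_pc h_pc g_le_h; destruct hL as [L_add [_ [L_pos _]]].
replace h with (fun x => g x + (h x - g x))
  by (apply functional_extensionality; intros; ring).
rewrite L_add by auto using periodic_cont_minus.
enough (0 <= L (fun x => h x - g x)) by lra.
apply L_pos; [apply periodic_cont_minus; auto|intros x; specialize (g_le_h x); lra].
Qed.

Lemma circle_prob_ge_const (c : R) (g : R -> R) :
  periodic_cont g -> (forall x, c <= g x) -> c <= L g.
Proof.
intros; rewrite <- (circle_prob_const c).
apply circle_prob_le; auto using periodic_cont_const.
Qed.

Lemma circle_prob_le_const (c : R) (g : R -> R) :
  periodic_cont g -> (forall x, g x <= c) -> L g <= c.
Proof.
intros; rewrite <- (circle_prob_const c).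
apply circle_prob_le; auto using periodic_cont_const.
Qed.

End CircleProb.

Lemma absq_1_minusE (r t : R) : absq_1_minus r t = 1 - 2 * r * cos t + r ^ 2.
Proof. unfold absq_1_minus; pose proof (sin2_cos2 t); unfold Rsqr in *; nra. Qed.

Lemma absq_1_minus_bounds (r t : R) :
  0 < r -> (1 - r) ^ 2 <= absq_1_minus r t <= (1 + r) ^ 2.
Proof. intros; rewrite absq_1_minusE; pose proof (COS_bound t); nra. Qed.

Lemma absq_1_minus_gt0 (r t : R) : 0 < r -> r <> 1 -> 0 < absq_1_minus r t.
Proof.
intros r_gt0 r_neq1; pose proof (absq_1_minus_bounds r t r_gt0).
enough (0 < (1 - r) ^ 2) by lra.
assert (1 - r <> 0) by lra; nra.
Qed.

Definition kernel (r theta x : R) : R := / absq_1_minus r (theta - x).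

Lemma periodic_cont_kernel (r theta : R) :
  0 < r -> r <> 1 -> periodic_cont (kernel r theta).
Proof.
intros r_gt0 r_neq1; split.
- intros x; apply continuity_pt_inv.
  + unfold absq_1_minus; reg.
  + apply Rgt_not_eq, absq_1_minus_gt0; auto.
- intros x; unfold kernel; rewrite !absq_1_minusE.
  replace (theta - x) with (theta - (x + 2 * PI) + 2 * INR 1 * PI)
    by (simpl; ring).
  rewrite cos_period; reflexivity.
Qed.

Lemma kernelV (r theta x : R) :
  0 < r -> r <> 1 -> kernel (/ r) theta x = r ^ 2 * kernel r theta x.
Proof.
intros r_gt0 r_neq1; unfold kernel.
pose proof (absq_1_minus_gt0 r (theta - x) r_gt0 r_neq1) as D_gt0.
rewrite !absq_1_minusE in *; field; split; lra.
Qed.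

Lemma kernel_le_4 (r theta x : R) : 0 < r <= / 2 -> kernel r theta x <= 4.
Proof.
intros r_bd; unfold kernel.
pose proof (absq_1_minus_bounds r (theta - x) ltac:(lra)).
replace 4 with (/ / 4) by field.
apply Rinv_le_contravar; nra.
Qed.

Lemma scaled_kernel_le (r1 r2 theta x : R) :
  0 < r1 <= r2 -> r2 < 1 ->
  (1 + r1) ^ 2 * kernel r1 theta x <= (1 + r2) ^ 2 * kernel r2 theta x.
Proof.
intros r1_bd r2_lt1; unfold kernel.
pose proof (absq_1_minus_gt0 r1 (theta - x) ltac:(lra) ltac:(lra)) as D1_gt0.
pose proof (absq_1_minus_gt0 r2 (theta - x) ltac:(lra) ltac:(lra)) as D2_gt0.
rewrite !absq_1_minusE in *; pose proof (COS_bound (theta - x)).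
set (k := cos (theta - x)) in *.
set (D1 := 1 - 2 * r1 * k + r1 ^ 2) in *; set (D2 := 1 - 2 * r2 * k + r2 ^ 2) in *.
apply (Rmult_le_reg_r (D1 * D2)); [nra|].
replace ((1 + r1) ^ 2 * / D1 * (D1 * D2)) with ((1 + r1) ^ 2 * D2) by (field; lra).
replace ((1 + r2) ^ 2 * / D2 * (D1 * D2)) with ((1 + r2) ^ 2 * D1) by (field; lra).
assert (cross : (1 + r2) ^ 2 * D1 - (1 + r1) ^ 2 * D2
               = 2 * (1 + k) * (r2 - r1) * (1 - r1 * r2)) by (unfold D1, D2; ring).
enough (0 <= 2 * (1 + k) * (r2 - r1) * (1 - r1 * r2)) by lra.
apply Rmult_le_pos; [apply Rmult_le_pos; lra|].
enough (r1 * r2 <= r2) by lra.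
rewrite <- (Rmult_1_l r2) at 2; apply Rmult_le_compat_r; lra.
Qed.

Lemma ln_lt0 (r : R) : 0 < r < 1 -> ln r < 0.
Proof. intros; rewrite <- ln_1; apply ln_increasing; lra. Qed.

Lemma ln_gt0 (r : R) : 1 < r -> 0 < ln r.
Proof. intros; rewrite <- ln_1; apply ln_increasing; lra. Qed.

Lemma ln_gt_half_sub_inv (r : R) : 0 < r < 1 -> (r - / r) / 2 < ln r.
Proof.
intros r_bd.
set (u := fun x => ln x - (x - / x) / 2).
destruct (MVT_cor2 u (fun c => - ((c - 1) ^ 2 / (2 * c ^ 2))) r 1 ltac:(lra))
  as [c [u_diff c_bd]].
{ intros c c_bd; apply is_derive_Reals; unfold u.
  auto_derive; [lra|field; lra]. }
assert (0 < (c - 1) ^ 2 / (2 * c ^ 2)) by (apply Rdiv_lt_0_compat; nra).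
unfold u in u_diff; rewrite ln_1, Rinv_1 in u_diff; nra.
Qed.

Definition ln_weight (r : R) : R := - ln r * ((1 + r) / (1 - r)).

Lemma ln_weight_gt0 (r : R) : 0 < r < 1 -> 0 < ln_weight r.
Proof.
intros r_bd; pose proof (ln_lt0 r r_bd).
apply Rmult_lt_0_compat; [lra|apply Rdiv_lt_0_compat; lra].
Qed.

Lemma ln_weight_decreasing (r1 r2 : R) :
  0 < r1 < r2 -> r2 < 1 -> ln_weight r2 < ln_weight r1.
Proof.
intros r1_bd r2_lt1.
set (dw := fun c => 2 / (1 - c) ^ 2 * ((c - / c) / 2 - ln c)).
destruct (MVT_cor2 ln_weight dw r1 r2 ltac:(lra)) as [c [w_diff c_bd]].
{ intros c c_bd; apply is_derive_Reals; unfold ln_weight, dw.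
  auto_derive; [repeat split; lra|field; lra]. }
assert (dw c < 0).
{ pose proof (ln_gt_half_sub_inv c ltac:(lra)).
  assert (0 < 2 / (1 - c) ^ 2) by (apply Rdiv_lt_0_compat; nra).
  unfold dw; nra. }
nra.
Qed.

Section PoissonMean.
Variable L : (R -> R) -> R.
Hypothesis hL : is_circle_prob L.
Variable theta : R.

Lemma fE (r : R) : f L r theta = / 2 * ((1 - r ^ 2) / - ln r) * L (kernel r theta).
Proof. reflexivity. Qed.

Lemma circle_prob_kernel_gt0 (r : R) : 0 < r -> r <> 1 -> 0 < L (kernel r theta).
Proof.
intros r_gt0 r_neq1.
apply Rlt_le_trans with (/ (1 + r) ^ 2); [apply Rinv_0_lt_compat; nra|].
apply (circle_prob_ge_const L hL); [apply periodic_cont_kernel; auto|].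
intros x; apply Rinv_le_contravar; [apply absq_1_minus_gt0; auto|].
apply absq_1_minus_bounds; auto.
Qed.

Lemma f_gt0 (r : R) : 0 < r -> r <> 1 -> 0 < f L r theta.
Proof.
intros r_gt0 r_neq1; rewrite fE.
enough (0 < (1 - r ^ 2) / - ln r).
{ pose proof (circle_prob_kernel_gt0 r r_gt0 r_neq1); apply Rmult_lt_0_compat; lra. }
destruct (Rlt_or_le r 1) as [r_lt1|r_ge1].
- pose proof (ln_lt0 r (conj r_gt0 r_lt1)); apply Rdiv_lt_0_compat; nra.
- pose proof (ln_gt0 r ltac:(lra)).
  replace ((1 - r ^ 2) / - ln r) with ((r ^ 2 - 1) / ln r) by (field; lra).
  apply Rdiv_lt_0_compat; nra.
Qed.

Lemma fV (r : R) : 0 < r -> f L (/ r) theta = f L r theta.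
Proof.
intros r_gt0; destruct (Req_dec r 1) as [->|r_neq1]; [rewrite Rinv_1; reflexivity|].
rewrite !fE.
replace (kernel (/ r) theta) with (fun x => r ^ 2 * kernel r theta x)
  by (apply functional_extensionality; intros x; rewrite kernelV; auto).
rewrite (circle_prob_scal L hL) by (apply periodic_cont_kernel; auto).
rewrite ln_Rinv by auto; pose proof (ln_neq_0 r r_neq1 r_gt0).
field; lra.
Qed.

Lemma f_ln_weightE (r : R) : 0 < r < 1 ->
  f L r theta = L (fun x => (1 + r) ^ 2 * kernel r theta x) / (2 * ln_weight r).
Proof.
intros r_bd; pose proof (ln_lt0 r r_bd).
rewrite fE, (circle_prob_scal L hL) by (apply periodic_cont_kernel; lra).
unfold ln_weight; field; lra.
Qed.

Lemma f_increasing (r1 r2 : R) :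
  0 < r1 < r2 -> r2 < 1 -> f L r1 theta < f L r2 theta.
Proof.
intros r1_bd r2_lt1.
set (Q r := fun x => (1 + r) ^ 2 * kernel r theta x).
assert (Q_pc : forall r, 0 < r < 1 -> periodic_cont (Q r)).
{ intros r r_bd; apply periodic_cont_scal, periodic_cont_kernel; lra. }
assert (LQ_le : L (Q r1) <= L (Q r2)).
{ apply (circle_prob_le L hL); [apply Q_pc; lra|apply Q_pc; lra|].
  intros x; apply scaled_kernel_le; lra. }
assert (LQ_gt0 : 0 < L (Q r1)).
{ unfold Q; rewrite (circle_prob_scal L hL) by (apply periodic_cont_kernel; lra).
  pose proof (circle_prob_kernel_gt0 r1 ltac:(lra) ltac:(lra)); nra. }
pose proof (ln_weight_decreasing r1 r2 r1_bd r2_lt1).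
pose proof (ln_weight_gt0 r2 ltac:(lra)).
rewrite !f_ln_weightE by lra; fold (Q r1) (Q r2).
apply Rlt_le_trans with (L (Q r1) / (2 * ln_weight r2)).
- apply Rmult_lt_compat_l; [lra|]; apply Rinv_lt_contravar; nra.
- apply Rmult_le_compat_r; [left; apply Rinv_0_lt_compat; lra|lra].
Qed.

Lemma f_le_small (r : R) : 0 < r <= / 2 -> f L r theta <= 2 / - ln r.
Proof.
intros r_bd; pose proof (ln_lt0 r ltac:(lra)).
assert (L (kernel r theta) <= 4).
{ apply (circle_prob_le_const L hL); [apply periodic_cont_kernel; lra|].
  intros x; apply kernel_le_4; lra. }
pose proof (circle_prob_kernel_gt0 r ltac:(lra) ltac:(lra)).
rewrite fE; unfold Rdiv.
apply Rle_trans with (/ 2 * (1 * / - ln r) * 4).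
- assert (0 < / - ln r) by (apply Rinv_0_lt_compat; lra).
  apply Rmult_le_compat; [|lra| |lra].
  + apply Rmult_le_pos; [lra|]; apply Rmult_le_pos; nra.
  + apply Rmult_le_compat_l; [lra|]; apply Rmult_le_compat_r; nra.
- right; field; lra.
Qed.

End PoissonMean.

Lemma lim_left1_ge (F : R -> R) (l : R) :
  (forall r1 r2, 0 < r1 < r2 -> r2 < 1 -> F r1 < F r2) ->
  lim_left1 F l -> forall r, 0 < r < 1 -> F r <= l.
Proof.
intros F_incr F_lim r r_bd; apply Rnot_lt_le; intros l_lt_Fr.
destruct (F_lim (F r - l) ltac:(lra)) as [d [d_gt0 near_l]].
destruct (Rlt_le_dec (1 - d) r) as [r_near|r_far].
- specialize (near_l r ltac:(lra)); pose proof (Rle_abs (F r - l)); lra.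
- specialize (near_l (1 - d / 2) ltac:(lra)).
  pose proof (Rle_abs (F (1 - d / 2) - l)).
  pose proof (F_incr r (1 - d / 2) ltac:(lra) ltac:(lra)); lra.
Qed.

Section PolarT.
Variable L : (R -> R) -> R.
Hypothesis hL : is_circle_prob L.
Variable theta : R.

Lemma T_neq1 (r : R) : r <> 1 -> T L r theta = / f L r theta.
Proof. intros r_neq1; unfold T; destruct (Req_EM_T r 1); [contradiction|reflexivity]. Qed.

Lemma TV (r : R) : 0 < r -> T L r theta = T L (/ r) theta.
Proof.
intros r_gt0; destruct (Req_dec r 1) as [->|r_neq1]; [rewrite Rinv_1; reflexivity|].
assert (/ r <> 1) by (intros rV_eq1; apply r_neq1; rewrite <- (Rinv_inv r), rV_eq1, Rinv_1; reflexivity).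
rewrite !T_neq1, fV; auto.
Qed.

Lemma T_decreasing (r1 r2 : R) :
  0 < r1 < r2 -> r2 < 1 -> T L r2 theta < T L r1 theta.
Proof.
intros r1_bd r2_lt1; rewrite !T_neq1 by lra.
pose proof (f_gt0 L hL theta r1 ltac:(lra) ltac:(lra)).
apply Rinv_lt_contravar; [|apply f_increasing; auto].
pose proof (f_increasing L hL theta r1 r2 r1_bd r2_lt1); nra.
Qed.

Lemma T_increasing (r1 r2 : R) : 1 < r1 < r2 -> T L r1 theta < T L r2 theta.
Proof.
intros r_bd; rewrite (TV r1), (TV r2) by lra.
apply T_decreasing.
- split; [apply Rinv_0_lt_compat; lra|apply Rinv_lt_contravar; nra].
- rewrite <- Rinv_1; apply Rinv_lt_contravar; lra.
Qed.

Lemma T1_le (r : R) : 0 < r < 1 -> T L 1 theta <= T L r theta.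
Proof.
intros r_bd; pose proof (f_gt0 L hL theta r ltac:(lra) ltac:(lra)).
rewrite (T_neq1 r) by lra; unfold T; destruct (Req_EM_T 1 1) as [_|]; [|congruence].
unfold T1; destruct (excluded_middle_informative _) as [lim_ex|_].
- destruct (constructive_indefinite_description _ lim_ex) as [l f_lim]; simpl.
  apply Rinv_le_contravar; [lra|].
  exact (lim_left1_ge _ l (f_increasing L hL theta) f_lim r r_bd).
- left; apply Rinv_0_lt_compat; lra.
Qed.

Lemma T_ge_T1 (r : R) : 0 < r -> T L 1 theta <= T L r theta.
Proof.
intros r_gt0; destruct (Rtotal_order r 1) as [r_lt1|[->|r_gt1]].
- apply T1_le; lra.
- lra.
- rewrite (TV r) by lra; apply T1_le; split.
  + apply Rinv_0_lt_compat; lra.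
  + rewrite <- Rinv_1; apply Rinv_lt_contravar; lra.
Qed.

Lemma T_ge_half_neg_ln (r : R) : 0 < r <= / 2 -> - ln r / 2 <= T L r theta.
Proof.
intros r_bd; pose proof (ln_lt0 r ltac:(lra)).
rewrite T_neq1 by lra; replace (- ln r / 2) with (/ (2 / - ln r)) by (field; lra).
apply Rinv_le_contravar; [apply f_gt0|apply f_le_small]; auto; lra.
Qed.

Lemma T_to_infty_at_0 (M : R) :
  exists delta, 0 < delta /\ forall r, 0 < r < delta -> M < T L r theta.
Proof.
exists (Rmin (/ 2) (exp (- (2 * M)))); split.
{ apply Rmin_glb_lt; [lra|apply exp_pos]. }
intros r [r_gt0 r_lt]; pose proof (Rmin_l (/ 2) (exp (- (2 * M)))).
assert (ln r < - (2 * M)).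
{ rewrite <- (ln_exp (- (2 * M))); apply ln_increasing; [lra|].
  pose proof (Rmin_r (/ 2) (exp (- (2 * M)))); lra. }
pose proof (T_ge_half_neg_ln r ltac:(lra)); lra.
Qed.

Lemma T_to_infty_at_infty (M : R) :
  exists K, 0 < K /\ forall r, K < r -> M < T L r theta.
Proof.
destruct (T_to_infty_at_0 M) as [d [d_gt0 T_gt]].
exists (/ d); split; [apply Rinv_0_lt_compat; lra|].
intros r r_gt; assert (0 < / d) by (apply Rinv_0_lt_compat; lra).
rewrite TV by lra; apply T_gt; split.
- apply Rinv_0_lt_compat; lra.
- rewrite <- (Rinv_inv d); apply Rinv_lt_contravar; nra.
Qed.

End PolarT.

Theorem lemma4p3 (L : (R -> R) -> R) (hL : is_circle_prob L) (theta : R) :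
  (forall r1 r2, 0 < r1 < r2 -> r2 < 1 -> T L r2 theta < T L r1 theta) /\
  (forall r1 r2, 1 < r1 < r2 -> T L r1 theta < T L r2 theta) /\
  (forall r, 0 < r -> T L 1 theta <= T L r theta) /\
  (forall M, exists delta, 0 < delta /\
     forall r, 0 < r < delta -> M < T L r theta) /\
  (forall M, exists K, 0 < K /\ forall r, K < r -> M < T L r theta) /\
  (forall r, 0 < r -> T L r theta = T L (/ r) theta).
Proof.
repeat split.
- exact (T_decreasing L hL theta).
- exact (T_increasing L hL theta).
- exact (T_ge_T1 L hL theta).
- exact (T_to_infty_at_0 L hL theta).
- exact (T_to_infty_at_infty L hL theta).
- exact (TV L hL theta).
Qed.
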